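(* For every computable endofunctor $d$, every represented space $\mathbf{Y}$ is $\kappa^d$-admissible, i.e. $\kappa^{(\kappa^d)}:\kappa^d\mathbf{Y}\to\mathcal{C}(\mathcal{O}(\mathbf{Y}),\kappa^d\mathbb{S})$ is injective with computable inverse on its image.
   Context: Represented spaces $(X,\delta_X)$ with $\delta_X:\subseteq\{0,1\}^\mathbb{N}\to X$ partial surjective; computable/continuous maps via realizers; $\mathcal{C}(\mathbf{X},\mathbf{Y})$ the represented space of continuous maps. $\mathbb{S}=(\{\bot,\top\},\delta_\mathbb{S})$, $\delta_\mathbb{S}(0^\mathbb{N})=\bot$, $\delta_\mathbb{S}(p)=\top$ otherwise; $\mathcal{O}(\mathbf{Y})=\mathcal{C}(\mathbf{Y},\mathbb{S})$. A computable endofunctor is an endofunctor $d$ on represented spaces with continuous maps such that each $f\mapsto df$ is computable. For such $d$ (or any computable endofunctor $e$), $\kappa^e:e\mathbf{Y}\to\mathcal{C}(\mathcal{O}(\mathbf{Y}),e\mathbb{S})$ is $\kappa^e(y)(U)=(eU)(y)$; $\mathbf{Y}$ is $e$-admissible if $\kappa^e$ is injective with computable inverse on its image. $\kappa^d$ is the computable endofunctor sending $\mathbf{Y}$ to the image $\kappa^d\mathbf{Y}$ of $\kappa^d:d\mathbf{Y}\to\mathcal{C}(\mathcal{O}(\mathbf{Y}),d\mathbb{S})$ and a continuous $f:\mathbf{Y}\to\mathbf{Z}$ to $\varphi\mapsto(V\mapsto\varphi(V\circ f))$. *)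

From Stdlib Require Import Arith Lia List Cantor ClassicalEpsilon FunctionalExtensionality ProofIrrelevance.
Import ListNotations.

Inductive prf : Type :=
| pZero | pSucc | pProj (i : nat) | pComp (f : prf) (gs : list prf)
| pPrec (f g : prf) | pMin (f : prf).

Inductive peval : prf -> list nat -> nat -> Prop :=
| peZero xs : peval pZero xs 0
| peSucc x xs : peval pSucc (x :: xs) (S x)
| peProj i xs : i < length xs -> peval (pProj i) xs (nth i xs 0)
| peComp f gs xs ys y : pevals gs xs ys -> peval f ys y -> peval (pComp f gs) xs y
| pePrec0 f g xs y : peval f xs y -> peval (pPrec f g) (0 :: xs) y
| pePrecS f g n xs r y : peval (pPrec f g) (n :: xs) r -> peval g (n :: r :: xs) y ->
    peval (pPrec f g) (S n :: xs) y
| peMin f xs n : peval f (n :: xs) 0 ->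
    (forall m, m < n -> exists k, peval f (m :: xs) (S k)) -> peval (pMin f) xs n
with pevals : list prf -> list nat -> list nat -> Prop :=
| pesNil xs : pevals [] xs []
| pesCons g gs xs y ys : peval g xs y -> pevals gs xs ys -> pevals (g :: gs) xs (y :: ys).

Definition Cantor := nat -> bool.

Definition computable_seq (q : Cantor) : Prop :=
  exists c : prf, forall n, peval c [n] (if q n then 1 else 0).

Definition prefix (p : Cantor) (k : nat) : list bool := map p (seq 0 k).

Fixpoint code (w : list bool) : nat :=
  match w with [] => 0 | b :: w' => 2 * code w' + 1 + (if b then 1 else 0) end.

Definition idx (n : nat) (w : list bool) (b : bool) : nat :=
  to_nat (to_nat (n, code w), if b then 1 else 0).

Lemma code_inj w w' : code w = code w' -> w = w'.
Proof.
  revert w'; induction w as [|b w IH]; intros [|b' w'] H; simpl in H; try lia; auto.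
  destruct b, b'; try lia; f_equal; apply IH; lia.
Qed.

Lemma to_nat_inj x y : to_nat x = to_nat y -> x = y.
Proof. intro H. rewrite <- (cancel_of_to x), <- (cancel_of_to y). now rewrite H. Qed.

Lemma idx_inj n w b n' w' b' : idx n w b = idx n' w' b' -> n = n' /\ w = w' /\ b = b'.
Proof.
  unfold idx; intro H.
  apply to_nat_inj in H.
  pose proof (f_equal fst H) as H1; pose proof (f_equal snd H) as H2; cbn [fst snd] in H1, H2.
  apply to_nat_inj in H1.
  pose proof (f_equal fst H1) as H3; pose proof (f_equal snd H1) as H4; cbn [fst snd] in H3, H4.
  subst n'. apply code_inj in H4.
  split; [auto|split; [auto|]]. destruct b, b'; simpl in H2; congruence.
Qed.

Lemma prefix_length p k : length (prefix p k) = k.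
Proof. unfold prefix; now rewrite length_map, length_seq. Qed.

Lemma prefix_ext p p' k : prefix p k = prefix p' k <-> forall i, i < k -> p i = p' i.
Proof.
  unfold prefix; induction k as [|k IH]; split; intros H.
  - intros; lia.
  - reflexivity.
  - rewrite seq_S, !map_app in H. simpl in H.
    apply app_inj_tail in H as [H1 H2].
    intros i Hi. destruct (Nat.eq_dec i k) as [->|]; [auto|].
    apply IH; [exact H1|lia].
  - rewrite seq_S, !map_app. simpl. f_equal.
    + apply IH; intros; apply H; lia.
    + f_equal; apply H; lia.
Qed.

Lemma prefix_le p p' k j : j <= k -> prefix p k = prefix p' k -> prefix p j = prefix p' j.
Proof. intros Hj H; apply prefix_ext; intros; apply prefix_ext with (k := k); auto; lia. Qed.

(** * Associates: the standard representation of continuous partial maps *)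
Definition assoc (q : Cantor) (p r : Cantor) : Prop :=
  forall n, (exists k, q (idx n (prefix p k) false) = true) /\
            (forall k, q (idx n (prefix p k) false) = true -> q (idx n (prefix p k) true) = r n).

Lemma assoc_uniq q p r r' : assoc q p r -> assoc q p r' -> r = r'.
Proof.
  intros H H'; apply functional_extensionality; intro n.
  destruct (H n) as [[k Hk] H1]; destruct (H' n) as [_ H2].
  rewrite <- (H1 k Hk); auto.
Qed.

Definition bool_of (P : Prop) : bool := if excluded_middle_informative P then true else false.
Lemma bool_of_true (P : Prop) : bool_of P = true <-> P.
Proof. unfold bool_of; destruct excluded_middle_informative; split; intros; auto; discriminate. Qed.

Definition eta (q p : Cantor) : Cantor := fun n =>
  bool_of (exists k, q (idx n (prefix p k) false) = true /\ q (idx n (prefix p k) true) = true).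

Lemma eta_assoc q p r : assoc q p r -> eta q p = r.
Proof.
  intro H; apply functional_extensionality; intro n.
  destruct (H n) as [[k Hk] H1].
  destruct (r n) eqn:E.
  - apply bool_of_true. exists k; split; [auto|]. rewrite H1; auto.
  - destruct (eta q p n) eqn:E'; auto.
    apply bool_of_true in E' as [k' [H2 H3]]. rewrite H1 in H3; congruence.
Qed.

Definition cont_on (D : Cantor -> Prop) (F : Cantor -> Cantor) : Prop :=
  forall p, D p -> forall n, exists k, forall p', D p' -> prefix p' k = prefix p k -> F p' n = F p n.

Lemma assoc_cont D q F : (forall p, D p -> assoc q p (F p)) -> cont_on D F.
Proof.
  intros H p Hp n. destruct (H p Hp n) as [[k Hk] H1].
  exists k; intros p' Hp' E. destruct (H p' Hp' n) as [_ H2].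
  rewrite <- (H1 k Hk). rewrite <- E. symmetry. apply H2. now rewrite E.
Qed.

Lemma cont_assoc D F : cont_on D F -> exists q, forall p, D p -> assoc q p (F p).
Proof.
  intro HF.
  set (P0 := fun n w => exists p, D p /\ prefix p (length w) = w /\
        forall p', D p' -> prefix p' (length w) = w -> F p' n = F p n).
  set (P1 := fun n w => exists p, D p /\ prefix p (length w) = w /\ F p n = true /\
        forall p', D p' -> prefix p' (length w) = w -> F p' n = F p n).
  exists (fun m => bool_of ((exists n w, m = idx n w false /\ P0 n w) \/
                         (exists n w, m = idx n w true /\ P1 n w))).
  assert (E0 : forall n w, bool_of ((exists n' w', idx n w false = idx n' w' false /\ P0 n' w') \/
                         (exists n' w', idx n w false = idx n' w' true /\ P1 n' w')) = true <-> P0 n w).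
  { intros n w; rewrite bool_of_true; split.
    - intros [[n' [w' [E H]]]|[n' [w' [E H]]]]; apply idx_inj in E as (-> & -> & E); [auto|discriminate].
    - intro; left; eauto. }
  assert (E1 : forall n w, bool_of ((exists n' w', idx n w true = idx n' w' false /\ P0 n' w') \/
                         (exists n' w', idx n w true = idx n' w' true /\ P1 n' w')) = true <-> P1 n w).
  { intros n w; rewrite bool_of_true; split.
    - intros [[n' [w' [E H]]]|[n' [w' [E H]]]]; apply idx_inj in E as (-> & -> & E); [discriminate|auto].
    - intro; right; eauto. }
  intros p Hp n; split.
  - destruct (HF p Hp n) as [k Hk]. exists k. apply E0.
    exists p; rewrite prefix_length; split; [auto|split; auto].
  - intros k Hk. apply E0 in Hk as [p0 [Hp0 [Ep0 Hk]]]. rewrite prefix_length in Ep0, Hk.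
    destruct (F p n) eqn:EF.
    + apply E1. exists p; rewrite prefix_length; split; [auto|split; [auto|split; auto]].
      intros p' Hp' E'. rewrite (Hk p' Hp' E'), (Hk p Hp eq_refl). reflexivity.
    + destruct (bool_of _) eqn:EB; auto.
      apply E1 in EB as [p1 [Hp1 [Ep1 [T Hk1]]]]. rewrite prefix_length in Ep1, Hk1.
      rewrite (Hk1 p Hp eq_refl) in EF; congruence.
Qed.

Lemma cont_prefix D F p : cont_on D F -> D p -> forall m, exists k,
  forall p', D p' -> prefix p' k = prefix p k -> prefix (F p') m = prefix (F p) m.
Proof.
  intros HF Hp m; induction m as [|m [k IH]].
  - exists 0; intros; reflexivity.
  - destruct (HF p Hp m) as [k' Hk']. exists (max k k'); intros p' Hp' E.
    apply prefix_ext; intros i Hi.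
    destruct (Nat.eq_dec i m) as [->|].
    + apply Hk'; auto. eapply prefix_le; [|exact E]; lia.
    + apply prefix_ext with (k := m); [|lia]. apply IH; auto.
      eapply prefix_le; [|exact E]; lia.
Qed.

Lemma cont_comp D E F G : cont_on D F -> cont_on E G -> (forall p, D p -> E (F p)) ->
  cont_on D (fun p => G (F p)).
Proof.
  intros HF HG HDE p Hp n.
  destruct (HG (F p) (HDE p Hp) n) as [m Hm].
  destruct (cont_prefix D F p HF Hp m) as [k Hk].
  exists k; intros p' Hp' Ep. apply Hm; auto.
Qed.

Lemma prefix_big (w w' : Cantor) K i : prefix w' K = prefix w K -> i < K -> w' i = w i.
Proof. intros E Hi. apply prefix_ext with (k := K); auto. Qed.

Lemma eta_cont_assoc p : cont_on (fun w => exists r, assoc w p r) (fun w => eta w p).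
Proof.
  intros w [r Hr] n. rewrite (eta_assoc _ _ _ Hr).
  destruct (Hr n) as [[k Hk] H1].
  exists (S (max (idx n (prefix p k) false) (idx n (prefix p k) true))).
  intros w' [r' Hr'] E. rewrite (eta_assoc _ _ _ Hr').
  destruct (Hr' n) as [_ H2].
  assert (A0 : w' (idx n (prefix p k) false) = w (idx n (prefix p k) false))
    by (apply prefix_big with (1 := E); lia).
  assert (A1 : w' (idx n (prefix p k) true) = w (idx n (prefix p k) true))
    by (apply prefix_big with (1 := E); lia).
  rewrite <- (H2 k) by congruence. rewrite A1. auto.
Qed.

Record rep_space : Type := {
  carrier : Type;
  rep : Cantor -> carrier -> Prop;   (* rep p x  <->  delta(p) = x *)
  rep_sv : forall p x y, rep p x -> rep p y -> x = y;
  rep_surj : forall x, exists p, rep p x }.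

Definition dom (X : rep_space) (p : Cantor) : Prop := exists x, rep X p x.

Definition realizes {X Y : rep_space} (q : Cantor) (f : carrier X -> carrier Y) : Prop :=
  forall p x, rep X p x -> exists r, assoc q p r /\ rep Y r (f x).

Definition continuous {X Y : rep_space} (f : carrier X -> carrier Y) : Prop :=
  exists q, realizes q f.

Definition computable {X Y : rep_space} (f : carrier X -> carrier Y) : Prop :=
  exists q, computable_seq q /\ realizes q f.

Lemma realizes_eta {X Y : rep_space} q (f : carrier X -> carrier Y) : realizes q f ->
  forall p x, rep X p x -> assoc q p (eta q p) /\ rep Y (eta q p) (f x).
Proof.
  intros H p x Hx. destruct (H p x Hx) as [r [Hr Hr']]. rewrite (eta_assoc _ _ _ Hr); auto.
Qed.

Lemma continuous_of_realizer {X Y : rep_space} (f : carrier X -> carrier Y) F :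
  cont_on (dom X) F -> (forall p x, rep X p x -> rep Y (F p) (f x)) -> continuous f.
Proof.
  intros HF HR. destruct (cont_assoc _ _ HF) as [q Hq].
  exists q; intros p x Hx. exists (F p); split; [apply Hq; exists x; auto | auto].
Qed.

Lemma realizes_cont {X Y : rep_space} q (f : carrier X -> carrier Y) : realizes q f ->
  cont_on (dom X) (eta q).
Proof.
  intro H. apply assoc_cont with (q := q). intros p [x Hx]. apply (realizes_eta q f H p x Hx).
Qed.

Definition Cspace (X Y : rep_space) : rep_space.
Proof.
  refine {| carrier := {f : carrier X -> carrier Y | continuous f};
            rep := fun q f => realizes q (proj1_sig f) |}.
  - intros q [f Hf] [g Hg] H1 H2; simpl in *.
    assert (f = g) as ->.
    { apply functional_extensionality; intro x. destruct (rep_surj X x) as [p Hp].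
      destruct (H1 p x Hp) as [r1 [A1 B1]]; destruct (H2 p x Hp) as [r2 [A2 B2]].
      rewrite (assoc_uniq _ _ _ _ A1 A2) in B1. eapply rep_sv; eauto. }
    f_equal; apply proof_irrelevance.
  - intros [f [q Hq]]; exists q; exact Hq.
Defined.

Definition cval {X Y : rep_space} (f : carrier (Cspace X Y)) : carrier X -> carrier Y := proj1_sig f.

(** Sierpinski space: false = bottom, true = top *)
Definition Sier : rep_space.
Proof.
  refine {| carrier := bool; rep := fun p b => (b = true <-> exists n, p n = true) |}.
  - intros p [|] [|] H1 H2; auto.
    + symmetry; apply H2, H1; auto.
    + apply H1, H2; auto.
  - intros [|].
    + exists (fun _ => true); split; [intros; exists 0; auto | auto].
    + exists (fun _ => false); split; [discriminate | intros [n H]; discriminate].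
Defined.

Definition Ospace (Y : rep_space) : rep_space := Cspace Y Sier.

Lemma continuous_comp {X Y Z : rep_space} (f : carrier X -> carrier Y) (g : carrier Y -> carrier Z) :
  continuous f -> continuous g -> continuous (fun x => g (f x)).
Proof.
  intros [a Ha] [b Hb].
  apply continuous_of_realizer with (F := fun p => eta b (eta a p)).
  - apply cont_comp with (E := dom Y).
    + eapply realizes_cont; eauto.
    + eapply realizes_cont; eauto.
    + intros p [x Hx]. exists (f x). apply (realizes_eta a f Ha p x Hx).
  - intros p x Hx. apply (realizes_eta b g Hb). apply (realizes_eta a f Ha p x Hx).
Qed.

Definition ccomp {X Y Z : rep_space} (g : carrier (Cspace Y Z)) (f : carrier (Cspace X Y)) :
  carrier (Cspace X Z) :=
  exist _ (fun x => cval g (cval f x)) (continuous_comp _ _ (proj2_sig f) (proj2_sig g)).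

Definition subspace (X : rep_space) (P : carrier X -> Prop) : rep_space.
Proof.
  refine {| carrier := {x : carrier X | P x}; rep := fun p x => rep X p (proj1_sig x) |}.
  - intros p [x Hx] [y Hy] H1 H2; simpl in *.
    assert (x = y) as -> by (eapply rep_sv; eauto). f_equal; apply proof_irrelevance.
  - intros [x Hx]; apply (rep_surj X x).
Defined.

Record pre_endo : Type := {
  pobj : rep_space -> rep_space;
  pmap : forall X Y : rep_space, carrier (Cspace X Y) -> carrier (pobj X) -> carrier (pobj Y) }.

Record comp_endo : Type := {
  eobj : rep_space -> rep_space;
  emap : forall X Y : rep_space, carrier (Cspace X Y) -> carrier (Cspace (eobj X) (eobj Y));
  emap_id : forall X (i : carrier (Cspace X X)), (forall x, cval i x = x) ->
              forall y, cval (emap X X i) y = y;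
  emap_comp : forall X Y Z (f : carrier (Cspace X Y)) (g : carrier (Cspace Y Z))
                (h : carrier (Cspace X Z)), (forall x, cval h x = cval g (cval f x)) ->
              forall y, cval (emap X Z h) y = cval (emap Y Z g) (cval (emap X Y f) y);
  emap_computable : forall X Y, @computable (Cspace X Y) (Cspace (eobj X) (eobj Y)) (emap X Y) }.

Definition endo_of (d : comp_endo) : pre_endo :=
  {| pobj := eobj d; pmap := fun X Y f y => cval (emap d X Y f) y |}.

Definition kappa (e : pre_endo) (Y : rep_space) (y : carrier (pobj e Y))
  (U : carrier (Ospace Y)) : carrier (pobj e Sier) := pmap e Y Sier U y.

Definition kimage (e : pre_endo) (Y : rep_space) : rep_space :=
  subspace (Cspace (Ospace Y) (pobj e Sier))
    (fun phi => exists y, forall U, cval phi U = kappa e Y y U).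

Definition admissible (e : pre_endo) (Y : rep_space) : Prop :=
  (forall y1 y2, (forall U, kappa e Y y1 U = kappa e Y y2 U) -> y1 = y2) /\
  exists g : carrier (kimage e Y) -> carrier (pobj e Y),
    computable g /\
    forall (phi : carrier (kimage e Y)) y,
      (forall U, cval (proj1_sig phi) U = kappa e Y y U) -> g phi = y.

Lemma kappa_continuous (d : comp_endo) (Y : rep_space) (z : carrier (eobj d Y)) :
  @continuous (Ospace Y) (eobj d Sier) (kappa (endo_of d) Y z).
Proof.
  destruct (emap_computable d Y Sier) as [Q [_ HQ]].
  destruct (rep_surj _ z) as [p Hp].
  apply continuous_of_realizer with (F := fun u => eta (eta Q u) p).
  - apply cont_comp with (E := fun w => exists r, assoc w p r) (F := eta Q) (G := fun w => eta w p).
    + eapply realizes_cont; eauto.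
    + apply eta_cont_assoc.
    + intros u [U HU]. destruct (realizes_eta Q _ HQ u U HU) as [_ H].
      destruct (H p z Hp) as [r [Hr _]]. eauto.
  - intros u U HU. destruct (realizes_eta Q _ HQ u U HU) as [_ H].
    apply (realizes_eta _ _ H p z Hp).
Qed.

Lemma kact_eq (d : comp_endo) (X Z : rep_space) (f : carrier (Cspace X Z))
  (phi : carrier (kimage (endo_of d) X)) : exists y,
  (fun V : carrier (Ospace Z) => cval (proj1_sig phi) (ccomp V f)) = kappa (endo_of d) Z y.
Proof.
  destruct phi as [phi [y Hy]]; simpl. exists (cval (emap d X Z f) y).
  apply functional_extensionality; intro V. rewrite Hy. unfold kappa; simpl.
  apply emap_comp. reflexivity.
Qed.

Lemma kact_cont (d : comp_endo) (X Z : rep_space) (f : carrier (Cspace X Z))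
  (phi : carrier (kimage (endo_of d) X)) :
  continuous (fun V : carrier (Ospace Z) => cval (proj1_sig phi) (ccomp V f)).
Proof.
  destruct (kact_eq d X Z f phi) as [y E]. assert (H := kappa_continuous d Z y). simpl in E. rewrite <- E in H. exact H.
Qed.

Lemma kact_img (d : comp_endo) (X Z : rep_space) (f : carrier (Cspace X Z))
  (phi : carrier (kimage (endo_of d) X)) :
  exists y, forall V : carrier (Ospace Z),
    cval (Y := pobj (endo_of d) Sier) (exist _ _ (kact_cont d X Z f phi)) V = kappa (endo_of d) Z y V.
Proof.
  destruct (kact_eq d X Z f phi) as [y E]. exists y; intro V.
  exact (f_equal (fun g => g V) E).
Qed.

Definition kact (d : comp_endo) (X Z : rep_space) (f : carrier (Cspace X Z))
  (phi : carrier (kimage (endo_of d) X)) : carrier (kimage (endo_of d) Z) :=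
  exist _ (exist _ (fun V : carrier (Ospace Z) => cval (proj1_sig phi) (ccomp V f))
                   (kact_cont d X Z f phi))
          (kact_img d X Z f phi).

Definition kappa_endo (d : comp_endo) : pre_endo :=
  {| pobj := kimage (endo_of d); pmap := kact d |}.

(* Applied to y = kappa^d(z), the map kappa^(kappa^d)(y) sends an open U to V |-> y(V o U); evaluating
   this at the identity open of the Sierpinski space gives back y(U). So kappa^(kappa^d) is injective,
   with inverse x |-> (U |-> x(U)(id)) on its image. This inverse is computable because evaluating
   a curried map at a point with a computable name is computable: from an associate of x and finite
   prefixes of a name of U and of the name of id, a bounded search (a recursive function with a
   recursive modulus of use) finds the output bits of x(U)(id). *)

From Pilot Require Import Defs.
From Stdlib Require Import Arith Lia List Cantor FunctionalExtensionality ProofIrrelevance.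
Import ListNotations.

Definition recursive (k : nat) (f : list nat -> nat) : Prop :=
  exists e, forall xs, length xs = k -> peval e xs (f xs).

Lemma recursive_ext k f g :
  recursive k f -> (forall xs, length xs = k -> f xs = g xs) -> recursive k g.
Proof. intros [e He] E; exists e; intros xs Hl; rewrite <- E by auto; auto. Qed.

Lemma recursive_var k i : i < k -> recursive k (fun xs => nth i xs 0).
Proof. intros H; exists (pProj i); intros xs Hl; constructor; lia. Qed.

Lemma recursive_comp k m h gs :
  recursive m h -> Forall (recursive k) gs -> length gs = m ->
  recursive k (fun xs => h (map (fun g => g xs) gs)).
Proof.
  intros [eh Hh] Hgs <-.
  assert (Hes : exists es, forall xs, length xs = k -> pevals es xs (map (fun g => g xs) gs)).
  { clear Hh. induction Hgs as [|g gs [e He] _ [es Hes]].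
    - exists []; intros; constructor.
    - exists (e :: es); intros; simpl; constructor; auto. }
  destruct Hes as [es Hes].
  exists (pComp eh es); intros xs Hx. econstructor; [apply Hes; auto|].
  apply Hh. now rewrite length_map.
Qed.

Lemma recursive_succ k f : recursive k f -> recursive k (fun xs => S (f xs)).
Proof.
  intros [e He]; exists (pComp pSucc [e]); intros xs Hx.
  econstructor; [constructor; [apply He; auto|constructor]|constructor].
Qed.

Lemma recursive_const k c : recursive k (fun _ => c).
Proof.
  induction c; [|apply recursive_succ; auto].
  exists pZero; intros; constructor.
Qed.

Lemma recursive_prec k b s :
  recursive k b -> recursive (S (S k)) s ->
  recursive (S k) (fun xs => nat_rec (fun _ => nat) (b (tl xs))
                               (fun i r => s (i :: r :: tl xs)) (hd 0 xs)).
Proof.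
  intros [eb Hb] [es Hs]; exists (pPrec eb es); intros [|n xs] Hx; simpl in Hx; [lia|].
  simpl. induction n as [|n IH].
  - constructor; apply Hb; lia.
  - econstructor; [apply IH|]. apply Hs; simpl; lia.
Qed.

Lemma map_nth_seq (xs : list nat) : map (fun i => nth i xs 0) (seq 0 (length xs)) = xs.
Proof.
  induction xs as [|x xs IH]; auto. simpl. f_equal.
  rewrite <- seq_shift, map_map. exact IH.
Qed.

(* The step function receives the counter and the accumulator in front of the arguments. *)
Lemma recursive_nat_rec k B (St : list nat -> nat -> nat -> nat) N :
  recursive k B ->
  recursive (S (S k)) (fun ys => St (tl (tl ys)) (hd 0 ys) (hd 0 (tl ys))) ->
  recursive k N ->
  recursive k (fun xs => nat_rec (fun _ => nat) (B xs) (St xs) (N xs)).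
Proof.
  intros HB HS HN.
  pose proof (recursive_comp k (S k) _ (N :: map (fun i xs => nth i xs 0) (seq 0 k))
                (recursive_prec k B _ HB HS)) as H.
  eapply recursive_ext; [apply H|].
  - constructor; auto. apply Forall_map, Forall_forall; intros i Hi%in_seq. apply recursive_var; lia.
  - simpl; rewrite length_map, length_seq; auto.
  - intros xs Hx. simpl. rewrite map_map, <- Hx, map_nth_seq. reflexivity.
Qed.

Definition recursive1 f := recursive 1 (fun xs => f (nth 0 xs 0)).
Definition recursive2 f := recursive 2 (fun xs => f (nth 0 xs 0) (nth 1 xs 0)).
Definition recursive3 f := recursive 3 (fun xs => f (nth 0 xs 0) (nth 1 xs 0) (nth 2 xs 0)).
Definition recursive4 f :=
  recursive 4 (fun xs => f (nth 0 xs 0) (nth 1 xs 0) (nth 2 xs 0) (nth 3 xs 0)).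

Lemma recursive_app1 f k a : recursive1 f -> recursive k a -> recursive k (fun xs => f (a xs)).
Proof. intros Hf Ha. eapply recursive_ext; [apply (recursive_comp k 1 _ [a] Hf)|]; auto. Qed.

Lemma recursive_app2 f k a b :
  recursive2 f -> recursive k a -> recursive k b -> recursive k (fun xs => f (a xs) (b xs)).
Proof. intros Hf Ha Hb. eapply recursive_ext; [apply (recursive_comp k 2 _ [a;b] Hf)|]; auto. Qed.

Lemma recursive_app3 f k a b c :
  recursive3 f -> recursive k a -> recursive k b -> recursive k c ->
  recursive k (fun xs => f (a xs) (b xs) (c xs)).
Proof. intros Hf Ha Hb Hc. eapply recursive_ext; [apply (recursive_comp k 3 _ [a;b;c] Hf)|]; auto. Qed.

Lemma recursive_app4 f k a b c d :
  recursive4 f -> recursive k a -> recursive k b -> recursive k c -> recursive k d ->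
  recursive k (fun xs => f (a xs) (b xs) (c xs) (d xs)).
Proof.
  intros Hf Ha Hb Hc Hd.
  eapply recursive_ext; [apply (recursive_comp k 4 _ [a;b;c;d] Hf)|]; auto 6.
Qed.

Lemma recursive_nth_tl k i T :
  recursive k (fun ys => nth (S i) (T ys) 0) -> recursive k (fun ys => nth i (tl (T ys)) 0).
Proof. intro H; eapply recursive_ext; [exact H|]. intros ys _; cbv beta; destruct (T ys); [destruct i|]; reflexivity. Qed.

Lemma recursive_hd k T : recursive k (fun ys => nth 0 (T ys) 0) -> recursive k (fun ys => hd 0 (T ys)).
Proof. intro H; eapply recursive_ext; [exact H|]. intros ys _; cbv beta; destruct (T ys); reflexivity. Qed.

Lemma recursive1_succ : recursive1 S.
Proof. apply recursive_succ, recursive_var; lia. Qed.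

Create HintDb recursive.
#[export] Hint Resolve recursive1_succ : recursive.

Definition ifz (c a b : nat) : nat := match c with 0 => a | S _ => b end.
Definition ltn x y := ifz (y - x) 0 1.

(* [mu P n] is the least [z < n] with [P z <> 0], and [n] if there is none. *)
Definition mu (P : nat -> nat) (n : nat) : nat :=
  nat_rec (fun _ => nat) 0 (fun i r => ifz (ltn r i) (ifz (P i) (S i) i) r) n.

Ltac solve_recursive :=
  try unfold mu;
  lazymatch goal with
  | |- recursive _ (fun _ => ?c) => apply recursive_const
  | |- recursive ?k ?f =>
  first
  [ lazymatch f with (fun _ => _) => fail | _ => change (recursive k (fun xs => f xs)); solve_recursive end
  | match goal with |- recursive _ (fun ys => nth _ ys 0) => apply recursive_var; lia end
  | match goal with |- recursive _ (fun ys => nth _ (tl (@?T ys)) 0) =>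
      apply recursive_nth_tl; cbv beta; solve_recursive end
  | match goal with |- recursive _ (fun ys => hd 0 (@?T ys)) =>
      apply recursive_hd; cbv beta; solve_recursive end
  | match goal with |- recursive _ (fun xs => nat_rec (fun _ => nat) (@?B xs) (@?St xs) (@?N xs)) =>
      apply (recursive_nat_rec _ B St N); [solve_recursive | cbv beta; solve_recursive | solve_recursive] end
  | match goal with |- recursive _ (fun xs => ?f (@?a xs) (@?b xs) (@?c xs) (@?d xs)) =>
      apply (recursive_app4 f);
      [solve [auto with recursive] | solve_recursive | solve_recursive | solve_recursive | solve_recursive] end
  | match goal with |- recursive _ (fun xs => ?f (@?a xs) (@?b xs) (@?c xs)) =>
      apply (recursive_app3 f);
      [solve [auto with recursive] | solve_recursive | solve_recursive | solve_recursive] end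
  | match goal with |- recursive _ (fun xs => ?f (@?a xs) (@?b xs)) =>
      apply (recursive_app2 f); [solve [auto with recursive] | solve_recursive | solve_recursive] end
  | match goal with |- recursive _ (fun xs => ?f (@?a xs)) =>
      apply (recursive_app1 f); [solve [auto with recursive] | solve_recursive] end ]
  end.

Lemma recursive2_add : recursive2 Nat.add.
Proof.
  eapply recursive_ext with
    (f := fun xs => nat_rec (fun _ => nat) (nth 1 xs 0) (fun _ r => S r) (nth 0 xs 0)).
  - solve_recursive.
  - intros xs _. induction (nth 0 xs 0); simpl; auto.
Qed.
#[export] Hint Resolve recursive2_add : recursive.

Lemma recursive3_ifz : recursive3 ifz.
Proof.
  eapply recursive_ext with
    (f := fun xs => nat_rec (fun _ => nat) (nth 1 xs 0) (fun _ _ => nth 2 xs 0) (nth 0 xs 0)).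
  - solve_recursive.
  - intros xs _. destruct (nth 0 xs 0); reflexivity.
Qed.
#[export] Hint Resolve recursive3_ifz : recursive.

Lemma recursive2_sub : recursive2 Nat.sub.
Proof.
  eapply recursive_ext with (f := fun xs => nat_rec (fun _ => nat) (nth 0 xs 0)
       (fun _ r => nat_rec (fun _ => nat) 0 (fun i _ => i) r) (nth 1 xs 0)).
  - solve_recursive.
  - intros xs _. cbv beta. induction (nth 1 xs 0) as [|n IH]; [simpl; lia|].
    simpl. rewrite IH, Nat.sub_succ_r. generalize (nth 0 xs 0 - n); intros [|]; reflexivity.
Qed.
#[export] Hint Resolve recursive2_sub : recursive.

Lemma recursive1_pred : recursive1 Nat.pred.
Proof. eapply recursive_ext with (f := fun xs => nth 0 xs 0 - 1); [solve_recursive | intros; lia]. Qed.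
#[export] Hint Resolve recursive1_pred : recursive.

Definition eqn x y := ifz ((x - y) + (y - x)) 1 0.
Definition andn x y := ifz x 0 (ifz y 0 1).
Lemma recursive2_ltn : recursive2 ltn. Proof. unfold recursive2, ltn. solve_recursive. Qed.
Lemma recursive2_eqn : recursive2 eqn. Proof. unfold recursive2, eqn. solve_recursive. Qed.
Lemma recursive2_andn : recursive2 andn. Proof. unfold recursive2, andn. solve_recursive. Qed.
#[export] Hint Resolve recursive2_ltn recursive2_eqn recursive2_andn : recursive.

Definition mod2 x := nat_rec (fun _ => nat) 0 (fun _ r => ifz r 1 0) x.
Definition div2 x := nat_rec (fun _ => nat) 0 (fun i r => r + mod2 i) x.
Lemma recursive1_mod2 : recursive1 mod2. Proof. unfold recursive1, mod2. solve_recursive. Qed.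
#[export] Hint Resolve recursive1_mod2 : recursive.
Lemma recursive1_div2 : recursive1 div2. Proof. unfold recursive1, div2. solve_recursive. Qed.
#[export] Hint Resolve recursive1_div2 : recursive.

(* [tonat x y] is convertible to [Cantor.to_nat (x, y)], the pairing used by [idx]. *)
Definition tri n := nat_rec (fun _ => nat) 0 (fun i m => S i + m) n.
Definition tonat x y := y + tri (y + x).
Lemma recursive1_tri : recursive1 tri. Proof. unfold recursive1, tri. solve_recursive. Qed.
#[export] Hint Resolve recursive1_tri : recursive.
Lemma recursive2_tonat : recursive2 tonat. Proof. unfold recursive2, tonat. solve_recursive. Qed.
#[export] Hint Resolve recursive2_tonat : recursive.

Definition pfst m := mu (fun x => ltn (mu (fun y => eqn (tonat x y) m) (S m)) (S m)) (S m).
Definition psnd m := mu (fun y => eqn (tonat (pfst m) y) m) (S m).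
Lemma recursive1_pfst : recursive1 pfst. Proof. unfold recursive1, pfst. solve_recursive. Qed.
#[export] Hint Resolve recursive1_pfst : recursive.
Lemma recursive1_psnd : recursive1 psnd. Proof. unfold recursive1, psnd. solve_recursive. Qed.
#[export] Hint Resolve recursive1_psnd : recursive.

Lemma ltn_true x y : x < y -> ltn x y = 1.
Proof. unfold ltn; intros; destruct (y - x) eqn:E; [lia|reflexivity]. Qed.
Lemma ltn_false x y : y <= x -> ltn x y = 0.
Proof. unfold ltn; intros; replace (y - x) with 0 by lia; reflexivity. Qed.
Lemma ltn_le1 x y : ltn x y <= 1.
Proof. unfold ltn; destruct (y - x); simpl; lia. Qed.
Lemma ltn_neq0 x y : ltn x y <> 0 -> x < y.
Proof. intros H. destruct (Nat.lt_ge_cases x y); auto. rewrite ltn_false in H; auto; lia. Qed.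
Lemma eqn_refl x : eqn x x = 1.
Proof. unfold eqn; rewrite Nat.sub_diag; reflexivity. Qed.
Lemma eqn_neq x y : x <> y -> eqn x y = 0.
Proof. unfold eqn; intros; destruct (x - y + (y - x)) eqn:E; [lia|reflexivity]. Qed.
Lemma eqn_neq0 x y : eqn x y <> 0 -> x = y.
Proof. intros H. destruct (Nat.eq_dec x y); auto. rewrite eqn_neq in H; auto; lia. Qed.
Lemma andn_neq0 x y : andn x y <> 0 <-> x <> 0 /\ y <> 0.
Proof. unfold andn; destruct x, y; simpl; split; intuition; lia. Qed.

Lemma div2_mod2 n : n = 2 * div2 n + mod2 n /\ mod2 n <= 1.
Proof.
  induction n as [|n [IH1 IH2]]; [simpl; lia|].
  change (div2 (S n)) with (div2 n + mod2 n). change (mod2 (S n)) with (ifz (mod2 n) 1 0).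
  destruct (mod2 n) as [|[|]] eqn:E; simpl; lia.
Qed.

Lemma div2_mod2_unique a b : b <= 1 -> div2 (2 * a + b) = a /\ mod2 (2 * a + b) = b.
Proof. intros Hb. destruct (div2_mod2 (2 * a + b)). lia. Qed.

Lemma tri_mono a b : a <= b -> tri a <= tri b.
Proof. induction 1; auto. simpl. change (nat_rec _ _ _ m) with (tri m). lia. Qed.
Lemma tonat_mono x y x' y' : x <= x' -> y <= y' -> tonat x y <= tonat x' y'.
Proof. unfold tonat; intros. pose proof (tri_mono (y + x) (y' + x')). lia. Qed.

Lemma tonat_ge x y : x <= tonat x y /\ y <= tonat x y.
Proof. change (tonat x y) with (to_nat (x, y)). pose proof (to_nat_non_decreasing x y). lia. Qed.
Lemma tonat_inj x y x' y' : tonat x y = tonat x' y' -> x = x' /\ y = y'.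
Proof. intros H. apply (Defs.to_nat_inj (x, y) (x', y')) in H. injection H; auto. Qed.

Lemma mu_spec P n : (mu P n = n /\ forall z, z < n -> P z = 0) \/
  (mu P n < n /\ P (mu P n) <> 0 /\ forall z, z < mu P n -> P z = 0).
Proof.
  induction n as [|n IH].
  - left; split; [reflexivity|intros; lia].
  - change (mu P (S n)) with (ifz (ltn (mu P n) n) (ifz (P n) (S n) n) (mu P n)).
    destruct IH as [[E H]|[L [H1 H2]]].
    + rewrite E, ltn_false by lia. simpl. destruct (P n) eqn:EP; simpl.
      * left; split; auto. intros z Hz. destruct (Nat.eq_dec z n); subst; auto. apply H; lia.
      * right; split; [lia|split]; [rewrite EP; discriminate|auto].
    + rewrite ltn_true by auto. simpl. right; split; [lia|auto].
Qed.

Lemma mu_le P n : mu P n <= n.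
Proof. destruct (mu_spec P n) as [[E _]|[L _]]; lia. Qed.

Lemma mu_eq P n x : x < n -> P x <> 0 -> (forall z, z < x -> P z = 0) -> mu P n = x.
Proof.
  intros Hx Px Hz. destruct (mu_spec P n) as [[E H]|[L [H1 H2]]].
  - exfalso; apply Px, H; auto.
  - destruct (Nat.lt_trichotomy (mu P n) x) as [Hl|[Hl|Hl]]; auto.
    + exfalso; apply H1, Hz; auto.
    + exfalso; apply Px, H2; auto.
Qed.

Lemma mu_none P n : (forall z, z < n -> P z = 0) -> mu P n = n.
Proof.
  intros H. destruct (mu_spec P n) as [[E _]|[L [H1 H2]]]; auto.
  exfalso; apply H1, H; auto.
Qed.

Lemma mu_ext P Q n : (forall z, z < n -> P z = Q z) -> mu P n = mu Q n.
Proof.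
  intros E. induction n as [|n IH]; auto.
  change (mu P (S n)) with (ifz (ltn (mu P n) n) (ifz (P n) (S n) n) (mu P n)).
  change (mu Q (S n)) with (ifz (ltn (mu Q n) n) (ifz (Q n) (S n) n) (mu Q n)).
  rewrite IH by (intros; apply E; lia). rewrite E by lia. reflexivity.
Qed.

Lemma pfst_tonat x y : pfst (tonat x y) = x.
Proof.
  unfold pfst. set (m := tonat x y). destruct (tonat_ge x y) as [H1 H2].
  assert (Hy : forall x', mu (fun y0 => eqn (tonat x' y0) m) (S m) =
                          if Nat.eq_dec x' x then y else S m).
  { intros x'. destruct (Nat.eq_dec x' x) as [->|n].
    - apply mu_eq; [lia| rewrite eqn_refl; lia|]. intros z Hz. apply eqn_neq. intros E%tonat_inj; lia.
    - apply mu_none. intros z _. apply eqn_neq. intros E%tonat_inj; lia. }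
  apply mu_eq; [lia| |].
  - rewrite Hy. destruct Nat.eq_dec; [|congruence]. rewrite ltn_true; lia.
  - intros z Hz. rewrite Hy. destruct Nat.eq_dec; [lia|]. apply ltn_false; lia.
Qed.

Lemma psnd_tonat x y : psnd (tonat x y) = y.
Proof.
  unfold psnd. rewrite pfst_tonat. destruct (tonat_ge x y) as [H1 H2].
  apply mu_eq; [lia| rewrite eqn_refl; lia|]. intros z Hz. apply eqn_neq. intros E%tonat_inj; lia.
Qed.

Definition b2n (b : bool) : nat := if b then 1 else 0.

Lemma b2n_le1 b : b2n b <= 1. Proof. destruct b; simpl; lia. Qed.
Lemma b2n_neq0 b : b2n b <> 0 -> b = true. Proof. destruct b; simpl; auto; lia. Qed.

Definition idxn n c b := tonat (tonat n c) b.
Lemma recursive3_idxn : recursive3 idxn. Proof. unfold recursive3, idxn. solve_recursive. Qed.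
#[export] Hint Resolve recursive3_idxn : recursive.

Lemma idx_idxn n w b : idx n w b = idxn n (code w) (b2n b).
Proof. reflexivity. Qed.

Lemma idxn_mono n c b n' c' b' : n <= n' -> c <= c' -> b <= b' -> idxn n c b <= idxn n' c' b'.
Proof. intros. unfold idxn. apply tonat_mono; auto. apply tonat_mono; auto. Qed.

Lemma idx_decode n w b : pfst (pfst (idx n w b)) = n /\ psnd (pfst (idx n w b)) = code w /\
                         psnd (idx n w b) = b2n b.
Proof. rewrite idx_idxn. unfold idxn. now rewrite !pfst_tonat, !psnd_tonat. Qed.

Definition code_drop j c := nat_rec (fun _ => nat) c (fun _ r => div2 (pred r)) j.
Definition code_nth j c := mod2 (pred (code_drop j c)).
Definition code_length c := nat_rec (fun _ => nat) 0 (fun i r => r + ifz (code_drop i c) 0 1) c.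

Lemma recursive2_code_drop : recursive2 code_drop.
Proof. unfold recursive2, code_drop. solve_recursive. Qed.
#[export] Hint Resolve recursive2_code_drop : recursive.
Lemma recursive2_code_nth : recursive2 code_nth.
Proof. unfold recursive2, code_nth. solve_recursive. Qed.
#[export] Hint Resolve recursive2_code_nth : recursive.
Lemma recursive1_code_length : recursive1 code_length.
Proof. unfold recursive1, code_length. solve_recursive. Qed.
#[export] Hint Resolve recursive1_code_length : recursive.

Lemma code_cons b w : code (b :: w) = 2 * code w + 1 + b2n b.
Proof. simpl. destruct b; simpl; lia. Qed.

Lemma code_drop_code j w : code_drop j (code w) = code (skipn j w).
Proof.
  revert w; induction j as [|j IH]; intros w; [reflexivity|].
  change (code_drop (S j) (code w)) with (div2 (pred (code_drop j (code w)))). rewrite IH.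
  destruct (skipn j w) as [|b w'] eqn:E.
  - apply skipn_all_iff in E. rewrite (skipn_all2 (n := S j) w) by lia. reflexivity.
  - rewrite code_cons. replace (pred _) with (2 * code w' + b2n b) by lia.
    rewrite (proj1 (div2_mod2_unique _ _ (b2n_le1 b))).
    replace (S j) with (1 + j) by lia. rewrite <- skipn_skipn, E. reflexivity.
Qed.

Lemma code_nth_code j w : code_nth j (code w) = b2n (nth j w false).
Proof.
  unfold code_nth. rewrite code_drop_code. revert j; induction w as [|b w IH]; intros j.
  - rewrite skipn_nil. destruct j; reflexivity.
  - destruct j as [|j]; [|apply IH].
    simpl skipn. rewrite code_cons. replace (pred _) with (2 * code w + b2n b) by lia.
    apply div2_mod2_unique, b2n_le1.
Qed.

Lemma code_nth_le1 j c : code_nth j c <= 1.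
Proof. apply div2_mod2. Qed.

Lemma code_length_code w : code_length (code w) = length w.
Proof.
  assert (H : forall N, nat_rec (fun _ => nat) 0 (fun i r => r + ifz (code_drop i (code w)) 0 1) N
                        = min N (length w)).
  { induction N as [|N IH]; [reflexivity|]. 
    change (nat_rec ?P ?b ?f (S N)) with (f N (nat_rec P b f N)); cbv beta.
    rewrite IH, code_drop_code.
    destruct (Nat.lt_ge_cases N (length w)).
    - destruct (skipn N w) as [|b w'] eqn:E; [apply skipn_all_iff in E; lia|].
      destruct (code (b :: w')) eqn:C; [rewrite code_cons in C; lia|cbn [ifz]; lia].
    - rewrite skipn_all2 by lia. cbn [ifz code]; lia. }
  assert (Hlen : length w <= code w).
  { clear H. induction w as [|b w IH]; [simpl; lia|]. rewrite code_cons; simpl; lia. }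
  unfold code_length. rewrite H. lia.
Qed.

Lemma nth_prefix (p : Cantor) K j : j < K -> nth j (prefix p K) false = p j.
Proof.
  intros H. unfold prefix. rewrite nth_indep with (d' := p 0) by (rewrite length_map, length_seq; auto).
  rewrite map_nth, seq_nth; auto.
Qed.

Lemma code_prefix_mono p k K : k <= K -> code (prefix p k) <= code (prefix p K).
Proof.
  induction 1; auto. unfold prefix in *. rewrite seq_S, map_app. simpl.
  enough (forall w b, code w <= code (w ++ [b])) by (specialize (H0 (map p (seq 0 m)) (p m)); lia).
  intros w b; induction w as [|x w IH]; simpl; [lia|]. destruct x; lia.
Qed.

Definition code_of_bits (o : nat -> nat) k :=
  nat_rec (fun _ => nat) 0 (fun i r => r + r + S (o (k - S i))) k.

Lemma code_of_bits_prefix (p : Cantor) o k :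
  (forall j, j < k -> o j = b2n (p j)) -> code_of_bits o k = code (prefix p k).
Proof.
  intros Ho. unfold code_of_bits, prefix.
  enough (H : forall i, i <= k -> nat_rec (fun _ => nat) 0 (fun i r => r + r + S (o (k - S i))) i
                                  = code (map p (seq (k - i) i)))
    by (rewrite H, Nat.sub_diag; auto).
  induction i as [|i IH]; intros Hi; [reflexivity|]. simpl nat_rec. rewrite IH by lia.
  replace (k - i) with (S (k - S i)) by lia. simpl (seq _ (S i)). rewrite map_cons, code_cons, Ho by lia.
  lia.
Qed.

Definition code_take k c := code_of_bits (fun j => code_nth j c) k.
Lemma recursive2_code_take : recursive2 code_take.
Proof. unfold recursive2, code_take, code_of_bits. solve_recursive. Qed.
#[export] Hint Resolve recursive2_code_take : recursive.

Lemma code_take_prefix u K k : k <= K -> code_take k (code (prefix u K)) = code (prefix u k).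
Proof.
  intros Hk. apply code_of_bits_prefix. intros j Hj. rewrite code_nth_code, nth_prefix; auto; lia.
Qed.

Lemma code_take_mono c k k' : k <= k' -> code_take k c <= code_take k' c.
Proof.
  intros H. set (f := fun j => Nat.eqb (code_nth j c) 1).
  assert (Hf : forall j, code_nth j c = b2n (f j)).
  { intros j; unfold f. pose proof (code_nth_le1 j c). destruct (code_nth j c) as [|[|]]; simpl; auto; lia. }
  unfold code_take. rewrite !(code_of_bits_prefix f) by auto. apply code_prefix_mono; auto.
Qed.

Lemma computable_seq_of_recursive f : recursive1 f -> computable_seq (fun n => f n =? 1).
Proof.
  intros Hf.
  assert (H : recursive 1 (fun xs => eqn (f (nth 0 xs 0)) 1)) by solve_recursive.
  destruct H as [e He]. exists e. intros n. specialize (He [n] eq_refl). simpl in He.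
  destruct (Nat.eq_dec (f n) 1) as [E|E].
  - rewrite E, eqn_refl in *. exact He.
  - rewrite eqn_neq in He by auto. rewrite (proj2 (Nat.eqb_neq _ _) E). exact He.
Qed.

Lemma recursive_of_computable_seq c : computable_seq c -> recursive1 (fun n => b2n (c n)).
Proof. intros [e He]. exists e. intros [|n [|]] Hl; simpl in Hl; try lia. apply He. Qed.

(* An associate which, on a prefix of length [k] of the input, outputs bit [n] as soon as
   [B n < k], namely the bit [G v n =? 1] computed from the code [v] of that prefix. *)
Definition modulus_query (B : nat -> nat) (G : nat -> nat -> nat) m :=
  ifz (psnd m) (ltn (B (pfst (pfst m))) (code_length (psnd (pfst m))))
      (G (psnd (pfst m)) (pfst (pfst m))).

Definition modulus_assoc B G : Cantor := fun m => modulus_query B G m =? 1.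

Lemma modulus_assoc_computable B G :
  recursive1 B -> recursive2 G -> computable_seq (modulus_assoc B G).
Proof.
  intros HB HG. apply computable_seq_of_recursive. unfold recursive1, modulus_query. solve_recursive.
Qed.

Lemma modulus_assoc_spec B G p r :
  (forall n k, B n < k -> (G (code (prefix p k)) n =? 1) = r n) -> assoc (modulus_assoc B G) p r.
Proof.
  intros HG n. unfold modulus_assoc, modulus_query.
  split.
  - exists (S (B n)). destruct (idx_decode n (prefix p (S (B n))) false) as (-> & -> & ->).
    cbn [b2n ifz]. rewrite code_length_code, prefix_length, ltn_true; auto.
  - intros k Hk.
    destruct (idx_decode n (prefix p k) false) as (E1 & E2 & E3). rewrite E1, E2, E3 in Hk.
    destruct (idx_decode n (prefix p k) true) as (-> & -> & ->).
    cbn [b2n ifz] in *. rewrite code_length_code, prefix_length in Hk.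
    apply HG, ltn_neq0. intros E. rewrite E in Hk. discriminate.
Qed.

Definition id_assoc : Cantor := modulus_assoc (fun n => n) (fun v n => code_nth n v).

Lemma id_assoc_computable : computable_seq id_assoc.
Proof.
  apply modulus_assoc_computable; unfold recursive1, recursive2; solve_recursive.
Qed.

Lemma id_assoc_spec p : assoc id_assoc p p.
Proof.
  apply modulus_assoc_spec. intros n k Hk. cbv beta. rewrite code_nth_code, nth_prefix by auto.
  destruct (p n); reflexivity.
Qed.

Section EvalAtPoint.

Variable c : Cantor.
Hypothesis c_computable : computable_seq c.

Definition point_bit n := b2n (c n).

Lemma recursive1_point_bit : recursive1 point_bit.
Proof. exact (recursive_of_computable_seq c c_computable). Qed.
#[local] Hint Resolve recursive1_point_bit : recursive.

Definition point_prefix_code k := code_of_bits point_bit k.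

Lemma point_prefix_code_eq k : point_prefix_code k = code (prefix c k).
Proof. apply code_of_bits_prefix; auto. Qed.

Lemma recursive1_point_prefix_code : recursive1 point_prefix_code.
Proof. unfold recursive1, point_prefix_code, code_of_bits. solve_recursive. Qed.
#[local] Hint Resolve recursive1_point_prefix_code : recursive.

(* The oracle [o] is a 0/1-valued associate and [w] the code of a finite input word.
   [partial_apply o w m] is [0] if [o] does not determine output bit [m] from [w], and
   [S b] if it determines it to be [b]. *)
Definition first_def o w m := mu (fun k => o (idxn m (code_take k w) 0)) (S (code_length w)).

Definition partial_apply o w m :=
  ifz (ltn (first_def o w m) (S (code_length w))) 0
      (S (o (idxn m (code_take (first_def o w m) w) 1))).

(* The least prefix length [k] of [c] on which the associate computed by [o] from [w] is
   seen to determine its output bit [n]. *)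
Definition inner_stage o w n :=
  mu (fun k => andn (eqn (partial_apply o w (idxn n (point_prefix_code k) 0)) 2)
                    (partial_apply o w (idxn n (point_prefix_code k) 1)))
     (S (code_length w)).

Definition eval_def o w n := ltn (inner_stage o w n) (S (code_length w)).
Definition eval_val o w n := pred (partial_apply o w (idxn n (point_prefix_code (inner_stage o w n)) 1)).

Definition eval_query o m :=
  ifz (psnd m) (eval_def o (psnd (pfst m)) (pfst (pfst m)))
               (eval_val o (psnd (pfst m)) (pfst (pfst m))).

(* Every oracle position read by [eval_query o m] is at most [eval_modulus m]. *)
Definition eval_modulus m :=
  idxn (idxn (pfst (pfst m)) (point_prefix_code (S (code_length (psnd (pfst m))))) 1)
       (code_take (S (code_length (psnd (pfst m)))) (psnd (pfst m))) 1.

Lemma recursive1_eval_modulus : recursive1 eval_modulus.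
Proof. unfold recursive1, eval_modulus. solve_recursive. Qed.

Lemma recursive2_eval_query_prefix : recursive2 (fun v m => eval_query (fun j => code_nth j v) m).
Proof.
  unfold recursive2, eval_query, eval_def, eval_val, inner_stage, partial_apply, first_def.
  solve_recursive.
Qed.

Lemma idxn_code_take u K k m b :
  k <= K -> idxn m (code_take k (code (prefix u K))) (b2n b) = idx m (prefix u k) b.
Proof. intros; rewrite code_take_prefix; auto. Qed.

Lemma partial_apply_spec p u r K m : assoc p u r ->
  (partial_apply (fun j => b2n (p j)) (code (prefix u K)) m = 0 \/
   partial_apply (fun j => b2n (p j)) (code (prefix u K)) m = S (b2n (r m))) /\
  (forall k, k <= K -> p (idx m (prefix u k) false) = true ->
   partial_apply (fun j => b2n (p j)) (code (prefix u K)) m <> 0).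
Proof.
  intros Ha. unfold partial_apply, first_def. rewrite code_length_code, prefix_length.
  destruct (mu_spec (fun k => b2n (p (idxn m (code_take k (code (prefix u K))) 0))) (S K))
    as [[E H]|[L [H1 H2]]].
  - rewrite E, ltn_false by lia. cbn [ifz]. split; [left; auto|].
    intros k Hk Hp. specialize (H k ltac:(lia)). cbv beta in H.
    change 0 with (b2n false) in H at 1. rewrite idxn_code_take, Hp in H by auto. discriminate.
  - rewrite ltn_true by auto. cbn [ifz]. split; [|intros; discriminate]. right. f_equal.
    set (k0 := mu _ _) in *. cbv beta in H1.
    change 0 with (b2n false) in H1 at 1. rewrite idxn_code_take in H1 by lia. apply b2n_neq0 in H1.
    change 1 with (b2n true). rewrite idxn_code_take by lia.
    destruct (Ha m) as [_ Hv]. rewrite (Hv k0 H1). reflexivity.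
Qed.

Lemma eval_val_correct p u r s K n : assoc p u r -> assoc r c s ->
  eval_def (fun j => b2n (p j)) (code (prefix u K)) n <> 0 ->
  eval_val (fun j => b2n (p j)) (code (prefix u K)) n = b2n (s n).
Proof.
  intros Ha Hr. unfold eval_def, eval_val, inner_stage. rewrite code_length_code, prefix_length.
  set (o := fun j => b2n (p j)). set (w := code (prefix u K)).
  set (Q := fun k => andn (eqn (partial_apply o w (idxn n (point_prefix_code k) 0)) 2)
                          (partial_apply o w (idxn n (point_prefix_code k) 1))).
  intros Hd. apply ltn_neq0 in Hd.
  destruct (mu_spec Q (S K)) as [[E _]|[L [H1 H2]]]; [lia|].
  set (k := mu Q (S K)) in *. unfold Q in H1. apply andn_neq0 in H1 as [H3 H4].
  apply eqn_neq0 in H3.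
  rewrite point_prefix_code_eq in *. change (idxn n (code (prefix c k)) 0) with (idx n (prefix c k) false) in H3.
  change (idxn n (code (prefix c k)) 1) with (idx n (prefix c k) true) in H4 |- *.
  destruct (partial_apply_spec p u r K (idx n (prefix c k) false) Ha) as [[E1|E1] _];
    fold o w in E1; [lia|].
  rewrite E1 in H3.
  assert (Er : r (idx n (prefix c k) false) = true) by (destruct (r _); simpl in H3; congruence).
  destruct (partial_apply_spec p u r K (idx n (prefix c k) true) Ha) as [[E2|E2] _];
    fold o w in E2; [lia|].
  rewrite E2. simpl. destruct (Hr n) as [_ Hv]. rewrite (Hv k Er). reflexivity.
Qed.

Lemma eval_def_eventually p u r s n : assoc p u r -> assoc r c s ->
  exists K0, forall K, K0 <= K -> eval_def (fun j => b2n (p j)) (code (prefix u K)) n <> 0.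
Proof.
  intros Ha Hr. destruct (Hr n) as [[k1 Hk1] Hv].
  destruct (Ha (idx n (prefix c k1) false)) as [[j0 Hj0] _].
  destruct (Ha (idx n (prefix c k1) true)) as [[j1 Hj1] _].
  exists (k1 + j0 + j1). intros K HK.
  unfold eval_def, inner_stage. rewrite code_length_code, prefix_length.
  set (o := fun j => b2n (p j)). set (w := code (prefix u K)).
  set (Q := fun k => andn (eqn (partial_apply o w (idxn n (point_prefix_code k) 0)) 2)
                          (partial_apply o w (idxn n (point_prefix_code k) 1))).
  assert (HQ : Q k1 <> 0).
  { unfold Q. rewrite point_prefix_code_eq.
    change (idxn n (code (prefix c k1)) 0) with (idx n (prefix c k1) false).
    change (idxn n (code (prefix c k1)) 1) with (idx n (prefix c k1) true).
    apply andn_neq0. split.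
    - destruct (partial_apply_spec p u r K (idx n (prefix c k1) false) Ha) as [[E1|E1] H1];
        fold o w in E1, H1.
      + exfalso. apply (H1 j0); auto; lia.
      + rewrite E1, Hk1, eqn_refl. lia.
    - destruct (partial_apply_spec p u r K (idx n (prefix c k1) true) Ha) as [_ H1].
      apply (H1 j1); auto; lia. }
  destruct (mu_spec Q (S K)) as [[E H]|[L _]].
  - exfalso; apply HQ, H; lia.
  - rewrite ltn_true; auto.
Qed.

Definition eval_realizer (p : Cantor) : Cantor := fun m => eval_query (fun j => b2n (p j)) m =? 1.

Lemma eval_realizer_spec p u r s : assoc p u r -> assoc r c s -> assoc (eval_realizer p) u s.
Proof.
  intros Ha Hr n. unfold eval_realizer, eval_query. split.
  - destruct (eval_def_eventually p u r s n Ha Hr) as [K0 HK0]. exists K0.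
    destruct (idx_decode n (prefix u K0) false) as (-> & -> & ->). cbn [b2n ifz].
    specialize (HK0 K0 (le_n _)). unfold eval_def in *.
    pose proof (ltn_le1 (inner_stage (fun j => b2n (p j)) (code (prefix u K0)) n)
                        (S (code_length (code (prefix u K0))))).
    destruct (ltn _ _) as [|[|]]; simpl; auto; lia.
  - intros k Hk. destruct (idx_decode n (prefix u k) false) as (E1 & E2 & E3).
    rewrite E1, E2, E3 in Hk. destruct (idx_decode n (prefix u k) true) as (-> & -> & ->).
    cbn [b2n ifz] in *. rewrite (eval_val_correct p u r s k n Ha Hr).
    + destruct (s n); reflexivity.
    + intros E; rewrite E in Hk; discriminate.
Qed.

Lemma partial_apply_agree o o' w m :
  (forall k b, k <= S (code_length w) -> b <= 1 ->
     o (idxn m (code_take k w) b) = o' (idxn m (code_take k w) b)) ->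
  partial_apply o w m = partial_apply o' w m.
Proof.
  intros E. unfold partial_apply.
  assert (HR : first_def o w m = first_def o' w m) by (apply mu_ext; intros z Hz; apply E; lia).
  rewrite HR, E; auto. apply mu_le.
Qed.

Lemma eval_query_agree o o' m :
  (forall j, j <= eval_modulus m -> o j = o' j) -> eval_query o m = eval_query o' m.
Proof.
  intros E. unfold eval_query, eval_modulus in *.
  set (n := pfst (pfst m)) in *. set (w := psnd (pfst m)) in *.
  assert (HR : forall k b, k <= S (code_length w) -> b <= 1 ->
            partial_apply o w (idxn n (point_prefix_code k) b)
            = partial_apply o' w (idxn n (point_prefix_code k) b)).
  { intros k b Hk Hb. apply partial_apply_agree. intros k' b' Hk' Hb'. apply E.
    apply idxn_mono; auto; [apply idxn_mono; auto|apply code_take_mono; auto].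
    rewrite !point_prefix_code_eq. apply code_prefix_mono; auto. }
  assert (HA : inner_stage o w n = inner_stage o' w n).
  { apply mu_ext. intros z Hz. rewrite !HR by lia. reflexivity. }
  unfold eval_def, eval_val. rewrite HA, HR; auto. apply mu_le.
Qed.

Definition eval_assoc : Cantor :=
  modulus_assoc eval_modulus (fun v m => eval_query (fun j => code_nth j v) m).

Lemma eval_assoc_spec p : assoc eval_assoc p (eval_realizer p).
Proof.
  apply modulus_assoc_spec. intros n k Hk. unfold eval_realizer. f_equal.
  apply eval_query_agree. intros j Hj. rewrite code_nth_code, nth_prefix by lia. reflexivity.
Qed.

Lemma eval_at_point_computable : exists Q, computable_seq Q /\
  forall p, exists p', assoc Q p p' /\ forall u r s, assoc p u r -> assoc r c s -> assoc p' u s.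
Proof.
  exists eval_assoc. split.
  - apply modulus_assoc_computable; [apply recursive1_eval_modulus|apply recursive2_eval_query_prefix].
  - intros p. exists (eval_realizer p). split; [apply eval_assoc_spec|apply eval_realizer_spec].
Qed.

End EvalAtPoint.

Lemma computable_eval_at {A B C : rep_space} (b : carrier B) c :
  computable_seq c -> rep B c b ->
  exists Q, computable_seq Q /\
    forall p (f : carrier A -> carrier B -> carrier C),
      (forall u a, rep A u a -> exists r, assoc p u r /\ realizes r (f a)) ->
      exists p', assoc Q p p' /\ realizes p' (fun a => f a b).
Proof.
  intros Hc Hb. destruct (eval_at_point_computable c Hc) as [Q [HQ HQp]].
  exists Q; split; [exact HQ|]. intros p f Hf.
  destruct (HQp p) as [p' [Hp' Heval]]. exists p'; split; [exact Hp'|].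
  intros u a Ha. destruct (Hf u a Ha) as [r [Hr Hfa]].
  destruct (Hfa c b Hb) as [s [Hs Hfab]]. exists s; split; eauto.
Qed.

Lemma id_assoc_realizes_id (X : rep_space) : @realizes X X id_assoc (fun x => x).
Proof. intros p x Hx. exists p; split; [apply id_assoc_spec|exact Hx]. Qed.

Definition sier_id : carrier (Ospace Sier) :=
  exist _ (fun b => b) (ex_intro _ id_assoc (id_assoc_realizes_id Sier)).

Lemma proj1_sig_inj {A : Type} {P : A -> Prop} (a b : sig P) : proj1_sig a = proj1_sig b -> a = b.
Proof. apply eq_sig_hprop. intros; apply proof_irrelevance. Qed.

Lemma ccomp_sier_id (Y : rep_space) (U : carrier (Ospace Y)) : ccomp sier_id U = U.
Proof. apply proj1_sig_inj. reflexivity. Qed.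

Section Unkappa.

Variable d : comp_endo.
Variable Y : rep_space.

Lemma kappa_kappa_at_sier_id (y : carrier (kimage (endo_of d) Y)) U :
  cval (proj1_sig (kappa (kappa_endo d) Y y U)) sier_id = cval (proj1_sig y) U.
Proof. simpl. now rewrite ccomp_sier_id. Qed.

Lemma kappa_kappa_injective y1 y2 :
  (forall U, kappa (kappa_endo d) Y y1 U = kappa (kappa_endo d) Y y2 U) -> y1 = y2.
Proof.
  intros H. apply proj1_sig_inj, proj1_sig_inj, functional_extensionality. intros U.
  pose proof (kappa_kappa_at_sier_id y1 U) as E. rewrite H, kappa_kappa_at_sier_id in E.
  exact (eq_sym E).
Qed.

Definition unkappa_fun (x : carrier (kimage (kappa_endo d) Y)) (U : carrier (Ospace Y)) :
  carrier (eobj d Sier) :=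
  cval (proj1_sig (cval (proj1_sig x) U)) sier_id.

Lemma unkappa_fun_kappa x y :
  (forall U, cval (proj1_sig x) U = kappa (kappa_endo d) Y y U) -> unkappa_fun x = cval (proj1_sig y).
Proof.
  intros H. apply functional_extensionality. intros U.
  unfold unkappa_fun. rewrite H. apply kappa_kappa_at_sier_id.
Qed.

Lemma unkappa_fun_continuous x : @continuous (Ospace Y) (eobj d Sier) (unkappa_fun x).
Proof.
  destruct (proj2_sig x) as [y Hy]. rewrite (unkappa_fun_kappa x y Hy). exact (proj2_sig (proj1_sig y)).
Qed.

Lemma unkappa_fun_in_image x :
  exists z, forall U, unkappa_fun x U = kappa (endo_of d) Y z U.
Proof.
  destruct (proj2_sig x) as [y Hy]. destruct (proj2_sig y) as [z Hz].
  exists z. intros U. rewrite (unkappa_fun_kappa x y Hy). apply Hz.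
Qed.

Definition unkappa (x : carrier (kimage (kappa_endo d) Y)) : carrier (kimage (endo_of d) Y) :=
  exist _ (exist _ (unkappa_fun x) (unkappa_fun_continuous x)) (unkappa_fun_in_image x).

Lemma unkappa_computable : computable unkappa.
Proof.
  destruct (computable_eval_at (A := Ospace Y) (C := eobj d Sier) sier_id id_assoc
              id_assoc_computable (id_assoc_realizes_id Sier)) as [Q [HQ HQr]].
  exists Q; split; [exact HQ|]. intros p x Hx.
  apply (HQr p (fun U V => cval (proj1_sig (cval (proj1_sig x) U)) V)).
  intros u U HU. destruct (Hx u U HU) as [r [Hr HrU]]. exists r; split; [exact Hr|exact HrU].
Qed.

End Unkappa.

Theorem corollary8 : forall (d : comp_endo) (Y : rep_space), admissible (kappa_endo d) Y.
Proof.
  intros d Y. split; [apply kappa_kappa_injective|].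
  exists (unkappa d Y). split; [apply unkappa_computable|].
  intros x y Hy. apply proj1_sig_inj, proj1_sig_inj. exact (unkappa_fun_kappa d Y x y Hy).
Qed.
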